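(* Let $n\geq 5$, let $S$ be the set of all $3$-cycles in $S_n$, let $CAG_n=\mathrm{Cay}(A_n,S)$, and let $G_e$ be the stabilizer of the identity vertex $e$ in $\mathrm{Aut}(CAG_n)$. For $1\leq i<j<k\leq n$ put $\Delta_{i,j,k}=\{(i,j,k),(i,k,j)\}$ and $\Delta=\{\Delta_{i,j,k}\mid 1\leq i<j<k\leq n\}$. Let $L_n$ be the graph with vertex set $\Delta$ in which $\Delta_{i,j,k}$ and $\Delta_{p,q,r}$ are adjacent iff $\{i,j,k\}\cap\{p,q,r\}=\emptyset$. Each $g\in G_e$ permutes the members of $\Delta$ (i.e. maps each $\Delta_{i,j,k}$ onto some member of $\Delta$), giving an action of $G_e$ on $\Delta$; let $K$ be the kernel of this action, so $G_e/K$ is a permutation group on $\Delta$. Then $G_e/K\leq\mathrm{Aut}(L_n)$, i.e. every permutation of $\Delta$ induced by an element of $G_e$ is an automorphism of $L_n$.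
   Context: For a finite group $\Gamma$ and a subset $T\subseteq\Gamma$ with $e\notin T$ and $T=T^{-1}$, the Cayley graph $\mathrm{Cay}(\Gamma,T)$ is the undirected graph with vertex set $\Gamma$ and edge set $\{\{\gamma,t\gamma\}\mid \gamma\in\Gamma, t\in T\}$. Elements of $G_e$ map $S$ (the neighbourhood of $e$) to itself. *)

From mathcomp Require Import all_boot all_fingroup all_solvable.
Set Implicit Arguments. Unset Strict Implicit. Unset Printing Implicit Defensive.
Local Open Scope group_scope.

Definition is3cycle (n : nat) (t : {perm 'I_n}) : bool :=
  [exists i : 'I_n, exists j : 'I_n, exists k : 'I_n,
     [&& i != j, j != k, i != k,
         t i == j, t j == k, t k == i &
         [forall x : 'I_n, (x \notin [:: i; j; k]) ==> (t x == x)]]].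

Definition S3 (n : nat) : {set {perm 'I_n}} := [set t | is3cycle t].

Definition cag_adj (n : nat) (x y : {perm 'I_n}) : bool :=
  [&& x \in 'Alt_('I_n), y \in 'Alt_('I_n) & (y * x^-1) \in S3 n].

(* f (a permutation of the ambient type stabilising A_n) restricts to an
   automorphism of CAG_n *)
Definition is_cag_aut (n : nat) (f : {perm {perm 'I_n}}) : Prop :=
  f @: 'Alt_('I_n) = 'Alt_('I_n) /\
  forall x y, x \in 'Alt_('I_n) -> y \in 'Alt_('I_n) ->
    cag_adj (f x) (f y) = cag_adj x y.

(* Delta = { Delta_{i,j,k} } with Delta_{i,j,k} = {(i,j,k),(i,k,j)} = {t, t^-1} *)
Definition Delta (n : nat) : {set {set {perm 'I_n}}} :=
  [set [set t; t^-1] | t in S3 n].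

Definition psupp (n : nat) (t : {perm 'I_n}) : {set 'I_n} := [set x | t x != x].

Definition dsupp (n : nat) (D : {set {perm 'I_n}}) : {set 'I_n} :=
  \bigcup_(t in D) psupp t.

Definition L_adj (n : nat) (D1 D2 : {set {perm 'I_n}}) : bool :=
  [&& D1 \in Delta n, D2 \in Delta n & [disjoint dsupp D1 & dsupp D2]].

From mathcomp Require Import all_boot all_fingroup alt.
From mathcomp Require Import zify.
Set Implicit Arguments. Unset Strict Implicit. Unset Printing Implicit Defensive.
Local Open Scope group_scope.

(* Since f fixes e, it permutes the neighbourhood S3 n of e, and it preserves
   adjacency between 3-cycles as well as the existence of a common neighbour in
   S3 n.  Both relations the theorem is about are expressible in these terms:
   t^-1 is the only neighbour of t that has no common neighbour with t in S3 n
   (a fifth point supplies the common neighbour otherwise), and two 3-cycles have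
   disjoint supports iff they are distinct, non-adjacent and without common
   neighbour.  Everything rests on the fact that adjacent 3-cycles share at least
   two points, which follows by comparing the support of a product with the
   symmetric difference of the supports. *)

Ltac simpl_points := repeat first
  [ progress rewrite ?eqxx /=
  | match goal with
    | H : is_true (?x != ?y) |- context [?x == ?y] => rewrite (negbTE H)
    | H : is_true (?x != ?y) |- context [?y == ?x] => rewrite [y == x]eq_sym (negbTE H)
    end ]; try done.

Ltac point_cases z := simpl_points;
  repeat match goal with |- context [z == ?a] =>
    case: (eqVneq z a) => [?|?]; [subst z|]; simpl_points end.

Lemma leq_card_disjoint (T : finType) (A B C : {set T}) :
  [disjoint A & B] -> A :|: B \subset C -> #|A| + #|B| <= #|C|.
Proof. by move=> /disjoint_setI0 AB /subset_leq_card; rewrite -cardsUI AB cards0 addn0. Qed.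

Section ThreeCycles.
Variable n : nat.
Implicit Types (a b c d x : 'I_n) (s t w : {perm 'I_n}).

Lemma tpermE a b x : tperm a b x = if x == a then b else if x == b then a else x.
Proof.
case: tpermP => [->|->|/eqP/negbTE xa /eqP/negbTE xb]; rewrite ?eqxx ?xa ?xb //.
by case: eqP.
Qed.

Definition cyc3 a b c : {perm 'I_n} := tperm a b * tperm a c.

Ltac cyc3_by_points := rewrite /cyc3 ?invMg ?tpermV; apply/permP;
  let z := fresh "z" in intro z; rewrite !permM ?perm1 !tpermE; point_cases z.

Lemma cyc3E a b c x : a != b -> b != c -> a != c ->
  cyc3 a b c x = if x == a then b else if x == b then c else if x == c then a else x.
Proof. by move=> ab bc ac; rewrite permM !tpermE; point_cases x. Qed.

Lemma cyc3_rot a b c : a != b -> b != c -> a != c -> cyc3 a b c = cyc3 b c a.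
Proof. by move=> ab bc ac; cyc3_by_points. Qed.

Lemma cyc3_rotr a b c : a != b -> b != c -> a != c -> cyc3 a b c = cyc3 c a b.
Proof. by move=> ab bc ac; cyc3_by_points. Qed.

Lemma cyc3V a b c : a != b -> b != c -> a != c -> (cyc3 a b c)^-1 = cyc3 b a c.
Proof. by move=> ab bc ac; cyc3_by_points. Qed.

Lemma cyc3_Alt a b c : a != b -> a != c -> cyc3 a b c \in 'Alt_('I_n).
Proof. by move=> ab ac; rewrite Alt_even odd_mul_tperm odd_tperm ab ac. Qed.

Lemma cyc3_S3 a b c : a != b -> b != c -> a != c -> cyc3 a b c \in S3 n.
Proof.
move=> ab bc ac; rewrite inE; apply/existsP; exists a; apply/existsP; exists b.
apply/existsP; exists c; rewrite ab bc ac !cyc3E //; simpl_points.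
apply/forallP => x; apply/implyP; rewrite !inE !negb_or => /and3P[xa xb xc].
by rewrite cyc3E //; simpl_points.
Qed.

Lemma S3_cyc3 s : s \in S3 n ->
  exists a b c, [/\ a != b, b != c, a != c & s = cyc3 a b c].
Proof.
rewrite inE => /existsP[a /existsP[b /existsP[c]]].
case/and4P=> ab bc ac /and4P[/eqP sa /eqP sb /eqP sc /forallP sfix].
exists a, b, c; split=> //; apply/permP => x; rewrite cyc3E //.
case: (eqVneq x a) => [->|xa] //; case: (eqVneq x b) => [->|xb] //.
case: (eqVneq x c) => [->|xc] //.
by apply/eqP; apply: (implyP (sfix x)); rewrite !inE !negb_or; apply/and3P.
Qed.

Lemma psupp_cyc3 a b c : a != b -> b != c -> a != c -> psupp (cyc3 a b c) = [set a; b; c].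
Proof. by move=> ab bc ac; apply/setP => x; rewrite !inE cyc3E //; point_cases x. Qed.

Lemma card_psupp_S3 s : s \in S3 n -> #|psupp s| = 3.
Proof.
case/S3_cyc3 => a [b [c [ab bc ac ->]]].
by rewrite psupp_cyc3 // setUC cardsU1 cards2 !inE negb_or !(eq_sym c) ab ac bc.
Qed.

Lemma S3_cyc3_at s a : s \in S3 n -> a \in psupp s ->
  exists b c, [/\ a != b, b != c, a != c & s = cyc3 a b c].
Proof.
case/S3_cyc3 => x [y [z [xy yz xz ->]]].
have [yx zy zx] : [/\ y != x, z != y & z != x] by split; rewrite eq_sym.
rewrite psupp_cyc3 // !inE -orbA; case/or3P => /eqP->.
- by exists y, z.
- by exists z, x; rewrite cyc3_rot.
- by exists x, y; rewrite cyc3_rotr.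
Qed.

Lemma S3_cyc3_pair s a b : s \in S3 n -> a \in psupp s -> b \in psupp s -> a != b ->
  exists c, [/\ a != c, b != c & s = cyc3 a b c \/ s = cyc3 b a c].
Proof.
move=> sS /(S3_cyc3_at sS)[x [y [ax xy ay ->]]].
have [xa ya yx] : [/\ x != a, y != a & y != x] by split; rewrite eq_sym.
rewrite psupp_cyc3 // !inE -orbA; case/or3P => /eqP->; first by rewrite eqxx.
- by exists y; split => //; left.
- by exists x; split => //; right; rewrite cyc3_rotr.
Qed.

Lemma psuppV s : psupp s^-1 = psupp s.
Proof.
apply/setP => x; rewrite !inE; congr negb.
by apply/eqP/eqP => E; rewrite -{1}E ?permKV // permK.
Qed.

Lemma S3V s : s \in S3 n -> s^-1 \in S3 n.
Proof. by case/S3_cyc3 => a [b [c [ab bc ac ->]]]; rewrite cyc3V // cyc3_S3 // eq_sym. Qed.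

Lemma S3_Alt s : s \in S3 n -> s \in 'Alt_('I_n).
Proof. by case/S3_cyc3 => a [b [c [ab bc ac ->]]]; rewrite cyc3_Alt. Qed.

Lemma one_notin_S3 : (1 : {perm 'I_n}) \notin S3 n.
Proof.
have psupp1 : psupp (1 : {perm 'I_n}) = set0 by apply/setP => x; rewrite !inE perm1 eqxx.
by apply/negP => /card_psupp_S3; rewrite psupp1 cards0.
Qed.

Lemma S3_iter2 s x : s \in S3 n -> x \in psupp s -> s (s x) != x.
Proof. by move=> sS /(S3_cyc3_at sS)[b [c [xb bc xc ->]]]; rewrite !cyc3E //; simpl_points. Qed.

Lemma psuppDl_mul s t : psupp s :\: psupp t \subset psupp (s * t).
Proof.
apply/subsetP => x; rewrite !inE permM => /andP[/negPn/eqP tx sx].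
by apply: contra sx => /eqP stx; apply/eqP/(@perm_inj _ t); rewrite stx tx.
Qed.

Lemma psuppDr_mul s t : psupp t :\: psupp s \subset psupp (s * t).
Proof. by apply/subsetP => x; rewrite !inE permM => /andP[/negPn/eqP->]. Qed.

Lemma S3_mul_meet s t : s \in S3 n -> t \in S3 n -> s * t \in S3 n ->
  1 < #|psupp s :&: psupp t|.
Proof.
move=> sS tS stS.
have disjD : [disjoint psupp s :\: psupp t & psupp t :\: psupp s].
  by rewrite disjoints_subset; apply/subsetP => x; rewrite !inE => /andP[_ ->].
have := leq_card_disjoint disjD (C := psupp (s * t)).
rewrite subUset psuppDl_mul psuppDr_mul => /(_ isT).
rewrite !cardsD [psupp t :&: _]setIC !card_psupp_S3 //; lia.
Qed.

Lemma cag_adj_S3 t s : t \in S3 n -> s \in S3 n -> cag_adj t s = (s * t^-1 \in S3 n).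
Proof. by move=> /S3_Alt tA /S3_Alt sA; rewrite /cag_adj tA sA. Qed.

Lemma cag_adj1 s : cag_adj 1 s = (s \in S3 n).
Proof.
rewrite /cag_adj group1 invg1 mulg1; case sS: (s \in S3 n); rewrite ?andbF //.
by rewrite andbT S3_Alt.
Qed.

Lemma cag_adj_irr t : t \in S3 n -> cag_adj t t = false.
Proof. by move=> tS; rewrite cag_adj_S3 // mulgV (negbTE one_notin_S3). Qed.

Lemma cag_adj_meet t s : t \in S3 n -> s \in S3 n -> cag_adj t s ->
  1 < #|psupp t :&: psupp s|.
Proof.
move=> tS sS; rewrite cag_adj_S3 // => /(S3_mul_meet sS (S3V tS)).
by rewrite psuppV setIC.
Qed.

Lemma cag_adj_cyc3_same a b c d : a != b -> b != c -> a != c -> a != d -> b != d ->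
  cag_adj (cyc3 a b c) (cyc3 a b d) = (d != c).
Proof.
move=> ab bc ac ad bd; have [<-|dc] := eqVneq d c; first by rewrite cag_adj_irr ?cyc3_S3.
rewrite cag_adj_S3 ?cyc3_S3 //.
have -> : cyc3 a b d * (cyc3 a b c)^-1 = cyc3 b d c by cyc3_by_points.
by rewrite cyc3_S3 // eq_sym.
Qed.

Lemma cag_adj_cyc3_opp a b c d : a != b -> b != c -> a != c -> a != d -> b != d ->
  cag_adj (cyc3 a b c) (cyc3 b a d) = (d == c).
Proof.
move=> ab bc ac ad bd; have ba : b != a by rewrite eq_sym.
rewrite cag_adj_S3 ?cyc3_S3 //; have [<-|dc] := eqVneq d c.
  have -> : cyc3 b a d * (cyc3 a b d)^-1 = cyc3 a b d by cyc3_by_points.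
  by rewrite cyc3_S3.
(* otherwise the product swaps a and d, which no 3-cycle does *)
set p := _ * _; apply/negbTE/negP => pS.
have pa : p a = d by rewrite permM cyc3V // !cyc3E //; simpl_points.
have pd : p d = a by rewrite permM cyc3V // !cyc3E //; simpl_points.
by have := S3_iter2 (x := a) pS; rewrite inE pa pd eqxx eq_sym ad => /(_ isT).
Qed.

Lemma S3_meet2_cyc3 t s : t \in S3 n -> s \in S3 n -> 1 < #|psupp t :&: psupp s| ->
  exists a b c d, [/\ [/\ a != b, b != c, a != c, a != d & b != d],
    t = cyc3 a b c & s = cyc3 a b d \/ s = cyc3 b a d].
Proof.
move=> tS sS /card_gt1P[x [y [/setIP[xt xs] /setIP[yt ys] xy]]].
have [c [xc yc tE]] := S3_cyc3_pair tS xt yt xy.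
wlog Et : x y xt xs yt ys xy xc yc {tE} / t = cyc3 x y c.
  by move=> hw; case: tE => Et; [apply: (hw x y) | apply: (hw y x)]; rewrite // eq_sym.
have [d [xd yd Es]] := S3_cyc3_pair sS xs ys xy.
by exists x, y, c, d.
Qed.

Lemma exists_fresh_point (n_ge5 : 5 <= n) a b c d :
  exists e, [/\ e != a, e != b, e != c & e != d].
Proof.
have /card_gt0P[e] : 0 < #|~: [set:: [:: a; b; c; d]]|.
  have := cardsC [set:: [:: a; b; c; d]]; have := card_size [:: a; b; c; d].
  rewrite cardsE card_ord => le4 sum_n.
  by rewrite -(ltn_add2l #|[:: a; b; c; d]|) addn0 sum_n (leq_ltn_trans le4).
by rewrite !inE !negb_or => /and4P[]; exists e.
Qed.

Definition common_nbr t s := [exists w in S3 n, cag_adj t w && cag_adj s w].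

Lemma cag_adj_inv t : t \in S3 n -> cag_adj t t^-1.
Proof. by case/S3_cyc3 => a [b [c [ab bc ac ->]]]; rewrite cyc3V // cag_adj_cyc3_opp. Qed.

Lemma common_nbr_inv t : t \in S3 n -> ~~ common_nbr t t^-1.
Proof.
move=> tS; apply/existsP => -[w /and3P[wS tw tVw]].
have [a [b [c [d [[ab bc ac ad bd] Et Ew]]]]] := S3_meet2_cyc3 tS wS (cag_adj_meet tS wS tw).
have ba : b != a by rewrite eq_sym.
move: tw tVw; rewrite Et cyc3V //; case: Ew => ->.
  by rewrite cag_adj_cyc3_same // cag_adj_cyc3_opp // => /negbTE->.
by rewrite cag_adj_cyc3_opp // cag_adj_cyc3_same // => ->.
Qed.

Lemma eq_inv_of_adj (n_ge5 : 5 <= n) t s : t \in S3 n -> s \in S3 n ->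
  cag_adj t s -> ~~ common_nbr t s -> s = t^-1.
Proof.
move=> tS sS ts.
have [a [b [c [d [[ab bc ac ad bd] Et [Es|Es]]]]]] := S3_meet2_cyc3 tS sS (cag_adj_meet tS sS ts).
  move: ts; rewrite Et Es cag_adj_cyc3_same // => dc /negP[]; apply/existsP.
  have [e [ea eb ec ed]] := exists_fresh_point n_ge5 a b c d.
  by exists (cyc3 a b e); rewrite cyc3_S3 ?cag_adj_cyc3_same //; simpl_points.
by move: ts; rewrite Et Es cag_adj_cyc3_opp // => /eqP-> _; rewrite cyc3V.
Qed.

Lemma disjoint_psupp_common_nbr t s w : t \in S3 n -> s \in S3 n -> w \in S3 n ->
  [disjoint psupp t & psupp s] -> ~~ (cag_adj t w && cag_adj s w).
Proof.
move=> tS sS wS dts; apply/andP => -[/(cag_adj_meet tS wS) tw /(cag_adj_meet sS wS) sw].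
have := leq_card_disjoint (C := psupp w)
  (disjointW (subsetIl _ (psupp w)) (subsetIl _ (psupp w)) dts).
by rewrite subUset !subsetIr card_psupp_S3 // => /(_ isT); lia.
Qed.

Lemma S3_meet_eq_adj_or_common t s : t \in S3 n -> s \in S3 n -> ~~ [disjoint psupp t & psupp s] ->
  [|| s == t, cag_adj t s | common_nbr t s].
Proof.
move=> tS sS; case: (ltnP 1 #|psupp t :&: psupp s|) => [meet2 _ | meet1].
  have [a [b [c [d [[ab bc ac ad bd] -> [->|->]]]]]] := S3_meet2_cyc3 tS sS meet2.
    have [->|dc] := eqVneq d c; first by rewrite eqxx.
    by rewrite cag_adj_cyc3_same // dc orbT.
  have [->|dc] := eqVneq d c; first by rewrite cag_adj_cyc3_opp // eqxx orbT.
  have ba : b != a by rewrite eq_sym.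
  apply/or3P/Or33/existsP; exists (cyc3 a b d).
  by rewrite cyc3_S3 // cag_adj_cyc3_same // cag_adj_cyc3_opp // dc eqxx.
rewrite -setI_eq0 => /set0Pn[x /setIP[xt xs]].
have [b [c [xb bc xc Et]]] := S3_cyc3_at tS xt.
have [y [z [xy yz xz Es]]] := S3_cyc3_at sS xs.
have outside u : u \in psupp s -> x != u -> u \notin psupp t.
  move=> us xu; apply/negP => ut; move: meet1; rewrite leqNgt => /negP; apply.
  by apply/card_gt1P; exists x, u; split => //; apply/setIP.
have [yb yc] : y != b /\ y != c.
  have := outside y; rewrite Es Et !psupp_cyc3 // !inE !eqxx !orbT /= => /(_ isT xy).
  by rewrite !negb_or => /andP[/andP[_ ->] ->].
have zc : z != c.
  have := outside z; rewrite Es Et !psupp_cyc3 // !inE !eqxx !orbT /= => /(_ isT xz).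
  by rewrite !negb_or => /andP[_ ->].
apply/or3P/Or33/existsP; exists (cyc3 x y c).
rewrite cyc3_S3 // Es cag_adj_cyc3_same // Et (cyc3_rotr xb bc xc) (cyc3_rotr xy yc xc).
by rewrite cag_adj_cyc3_same //; simpl_points.
Qed.

Lemma disjoint_psupp_S3 t s : t \in S3 n -> s \in S3 n ->
  [disjoint psupp t & psupp s] = [&& s != t, ~~ cag_adj t s & ~~ common_nbr t s].
Proof.
move=> tS sS; apply/idP/idP => [dts | /and3P[st nts ncts]].
  apply/and3P; split.
  - by apply: contraTneq dts => ->; rewrite -setI_eq0 setIid -card_gt0 card_psupp_S3.
  - by apply: contraL dts => /(cag_adj_meet tS sS) meet; rewrite -setI_eq0 -card_gt0 ltnW.
  - apply/negP => /existsP[w /andP[wS]]; apply/negP.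
    exact: disjoint_psupp_common_nbr.
apply/negPn/negP => /(S3_meet_eq_adj_or_common tS sS).
by rewrite (negbTE st) (negbTE nts) (negbTE ncts).
Qed.

End ThreeCycles.

Lemma dsupp_pair n (t : {perm 'I_n}) : dsupp [set t; t^-1] = psupp t.
Proof. by rewrite /dsupp bigcup_setU !big_set1 psuppV setUid. Qed.

Section CayleyAutomorphism.
Variables (n : nat) (f : {perm {perm 'I_n}}).
Hypotheses (f_aut : is_cag_aut f) (f1 : f 1 = 1).

Lemma aut_S3 t : t \in 'Alt_('I_n) -> (f t \in S3 n) = (t \in S3 n).
Proof. by move=> tA; rewrite -!cag_adj1 -(proj2 f_aut 1 t) ?group1 // f1. Qed.

Lemma aut_common_nbr t s : t \in 'Alt_('I_n) -> s \in 'Alt_('I_n) ->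
  common_nbr (f t) (f s) = common_nbr t s.
Proof.
case: f_aut => fA fadj tA sA; apply/existsP/existsP => -[w /and3P[wS tw sw]].
  have /imsetP[v vA Ew] : w \in f @: 'Alt_('I_n) by rewrite fA S3_Alt.
  rewrite Ew !fadj // in wS tw sw.
  by exists v; rewrite -aut_S3 // wS tw sw.
have wA := S3_Alt wS.
by exists (f w); rewrite aut_S3 // !fadj // wS tw sw.
Qed.

Lemma aut_invg (n_ge5 : 5 <= n) t : t \in S3 n -> f t^-1 = (f t)^-1.
Proof.
move=> tS; have tVS := S3V tS; have [tA tVA] := (S3_Alt tS, S3_Alt tVS).
apply: eq_inv_of_adj; rewrite ?aut_S3 ?(proj2 f_aut) ?aut_common_nbr //.
  exact: cag_adj_inv.
exact: common_nbr_inv.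
Qed.

Lemma aut_disjoint_psupp t s : t \in S3 n -> s \in S3 n ->
  [disjoint psupp (f t) & psupp (f s)] = [disjoint psupp t & psupp s].
Proof.
move=> tS sS; have [tA sA] := (S3_Alt tS, S3_Alt sS).
by rewrite !disjoint_psupp_S3 ?aut_S3 // (inj_eq perm_inj) (proj2 f_aut) ?aut_common_nbr.
Qed.

End CayleyAutomorphism.

Theorem lemma3p5 (n : nat) (hn : 5 <= n) (f : {perm {perm 'I_n}}) :
  is_cag_aut f -> f 1 = 1 ->
  (forall D, D \in Delta n -> f @: D \in Delta n) /\
  (forall D1 D2, D1 \in Delta n -> D2 \in Delta n ->
     L_adj (f @: D1) (f @: D2) = L_adj D1 D2).
Proof.
move=> f_aut f1.
have pair_Delta t : t \in S3 n -> [set t; t^-1] \in Delta n by move=> tS; apply: imset_f.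
have f_pair t : t \in S3 n -> f @: [set t; t^-1] = [set f t; (f t)^-1].
  by move=> tS; rewrite imsetU !imset_set1 (aut_invg f_aut f1 hn tS).
have fS t : t \in S3 n -> f t \in S3 n by move=> tS; rewrite aut_S3 ?S3_Alt.
split=> [_ /imsetP[t tS ->] | _ _ /imsetP[t tS ->] /imsetP[s sS ->]].
  by rewrite f_pair // pair_Delta ?fS.
rewrite /L_adj !f_pair // !pair_Delta ?fS // !dsupp_pair.
exact: aut_disjoint_psupp.
Qed.
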